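(* Let $(A,B)$ be a Katsura pair with $B\in M_N(\{0,1\})$ and KEP-action $(G_B,E_A)$. For $\mu,\nu\in E_A^{-\infty}$, $\mu\sim_e\nu$ if and only if either $\mu=\nu$, or there is $K<0$ such that $s(\mu_k)=s(\nu_k)=:v_k$ for all $k\le K$ and $B_{v_{k-1},v_k}=1$ for all $k\le K$, and, if $K<-1$, $B_{v_K,v_{K+1}}=0$ and $\mu_{K+1}\cdots\mu_{-1}=\nu_{K+1}\cdots\nu_{-1}$.
   Context: Katsura pair: $N\in\mathbb{N}$, $A\in M_N(\mathbb{N})$ (nonnegative integers), $B\in M_N(\mathbb{Z})$ with $A_{ij}=0\Rightarrow B_{ij}=0$. Graph $E_A$: vertices $\{1,\dots,N\}$, edges $e_{i,j,m}$ ($0\le m<A_{ij}$), $r=i$, $s=j$. $E_A^{-\infty}$ is the set of left-infinite paths $\mu=\cdots\mu_{-2}\mu_{-1}$ with $s(\mu_k)=r(\mu_{k+1})$ (so $r(\mu_k)=s(\mu_{k-1})$). The group bundle $\mathbb{Z}\times E_A^0$ (elements $a_i^k$) acts by $a_i^k\cdot e_{i,j,m}=e_{i,j,\hat m}$, $a_i^k|_{e_{i,j,m}}=a_j^{\hat k}$ where $kB_{ij}+m=\hat kA_{ij}+\hat m$, $0\le\hat m<A_{ij}$, extended to finite paths by $g\cdot(e\nu)=(g\cdot e)(g|_e\cdot\nu)$; $G_B$ is the quotient by elements acting trivially, and $(G_B,E_A)$ is the KEP-action. $\mu\sim_e\nu$ iff there is $(g_n)_{n<0}\subseteq G_B$ with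 $d(g_n)=r(\mu_n)$ and $g_n\cdot\mu_n\cdots\mu_{-1}=\nu_n\cdots\nu_{-1}$ for all $n<0$. *)

From mathcomp Require Import all_boot all_order all_algebra.
Set Implicit Arguments. Unset Strict Implicit. Unset Printing Implicit Defensive.
Import Order.TTheory GRing.Theory Num.Theory.
Local Open Scope ring_scope.

(* Vertices of E_A are 'I_N (0-based version of {1,..,N}).
   An edge e_{i,j,m} is encoded as (Edge i j m), with r = i, s = j;
   it is a genuine edge of E_A iff m < A i j. *)
Record edge (N : nat) := Edge { er : 'I_N; es : 'I_N; em : nat }.
Arguments Edge {N}.

Definition valid_edge (N : nat) (A : 'M[nat]_N) (e : edge N) : Prop :=
  (em e < A (er e) (es e))%N.

(* A left-infinite path mu = ... mu_{-2} mu_{-1} is encoded as a function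
   mu : nat -> edge N with  mu_{k} = mu (-k-1)  for k < 0. *)
Definition at_ (N : nat) (mu : nat -> edge N) (k : int) : edge N :=
  mu (`|k|.-1)%N.

Definition is_lpath (N : nat) (A : 'M[nat]_N) (mu : nat -> edge N) : Prop :=
  forall k : int, k < 0 ->
    valid_edge A (at_ mu k) /\ (k < -1 -> es (at_ mu k) = er (at_ mu (k + 1))).

Definition seg (N : nat) (mu : nat -> edge N) (n : int) : seq (edge N) :=
  rev (mkseq mu `|n|).

(* Action of a_i^k (i = r(e)) on the edge e = e_{i,j,m}:
   returns (a_i^k . e, k') where a_i^k|_e = a_j^{k'}, with
   k B_ij + m = k' A_ij + m',  0 <= m' < A_ij. *)
Definition act_edge (N : nat) (A : 'M[nat]_N) (B : 'M[int]_N) (k : int)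
    (e : edge N) : edge N * int :=
  let x := k * B (er e) (es e) + (em e)%:Z in
  let a := (A (er e) (es e))%:Z in
  (Edge (er e) (es e) `|(x %% a)%Z|%N, (x %/ a)%Z).

(* Action of a_{r(p)}^k on a finite path p: g.(e p') = (g.e)(g|_e . p'). *)
Fixpoint act_path (N : nat) (A : 'M[nat]_N) (B : 'M[int]_N) (k : int)
    (p : seq (edge N)) : seq (edge N) :=
  match p with
  | [::] => [::]
  | e :: p' => let ek := act_edge A B k e in ek.1 :: act_path A B ek.2 p'
  end.

(* mu ~_e nu : for every n < 0 there is g_n in G_B with d(g_n) = r(mu_n)
   and g_n . mu_n...mu_{-1} = nu_n...nu_{-1}.  An element of G_B with domain
   r(mu_n) is the class of some a_{r(mu_n)}^k, k in Z, and the action of a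
   class is that of any representative. *)
Definition ext_equiv (N : nat) (A : 'M[nat]_N) (B : 'M[int]_N)
    (mu nu : nat -> edge N) : Prop :=
  forall n : int, n < 0 -> exists k : int, act_path A B k (seg mu n) = seg nu n.

(* The generator a_v^k never changes the vertices of a path.  Along an edge
   e with B_e = 0 it fixes e and restricts to the identity a^0, so from the
   first such edge on a finite segment is fixed.  Along edges with B_e = 1 it
   acts as an odometer (add k to the digit m_e, carry to the next edge), hence
   transitively on the paths with a given vertex sequence.  So two segments
   mu_n...mu_{-1} and nu_n...nu_{-1} are in one orbit iff they have the same
   vertices, all edges have B = 1 up to the first edge with B = 0, and the
   segments agree from that edge on.  Letting n -> -oo, either edges with
   B = 0 occur arbitrarily far to the left, forcing mu = nu, or there is a
   leftmost one, and its position determines K. *)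

From mathcomp Require Import all_boot all_order all_algebra.
From mathcomp Require Import zify.
From Stdlib Require Import Classical FunctionalExtensionality.
Import Order.TTheory GRing.Theory Num.Theory.
Set Implicit Arguments. Unset Strict Implicit. Unset Printing Implicit Defensive.
Local Open Scope ring_scope.

Section KEPAction.
Variables (N : nat) (A : 'M[nat]_N) (B : 'M[int]_N).

Definition validb (e : edge N) : bool := (em e < A (er e) (es e))%N.
Definition ends (e : edge N) : 'I_N * 'I_N := (er e, es e).
Definition Bentry (e : edge N) : int := B (er e) (es e).

Lemma act_edge_id k e :
  validb e -> k * Bentry e = 0 -> act_edge A B k e = (e, 0).
Proof.
rewrite /validb /Bentry /act_edge => he ->; rewrite add0r.
have he' : 0 <= (em e)%:Z < (A (er e) (es e))%:Z by lia.
by rewrite modz_small ?divz_small //=; case: e {he} he'.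
Qed.

Lemma act_path_cons k e p :
  act_path A B k (e :: p) = (act_edge A B k e).1 :: act_path A B (act_edge A B k e).2 p.
Proof. by []. Qed.

Lemma act_path0 p : all validb p -> act_path A B 0 p = p.
Proof.
elim: p => [//|e p IH] /andP[he /IH{}IH].
by rewrite act_path_cons act_edge_id ?mul0r //= IH.
Qed.

Lemma act_path_Bentry0 k e p :
  all validb (e :: p) -> Bentry e = 0 -> act_path A B k (e :: p) = e :: p.
Proof.
move=> /andP[he hp] hB.
by rewrite act_path_cons act_edge_id ?hB ?mulr0 //= act_path0.
Qed.

Lemma act_path_cat k p q :
  exists k', act_path A B k (p ++ q) = act_path A B k p ++ act_path A B k' q.
Proof.
elim: p k => [|e p IH] k /=; first by exists k.
by have [k' ->] := IH (act_edge A B k e).2; exists k'.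
Qed.

Lemma act_path_ends k p : map ends (act_path A B k p) = map ends p.
Proof. by elim: p k => //= e p IH k; rewrite IH. Qed.

Lemma act_path_transitive p q :
  all validb q -> map ends p = map ends q -> all (fun e => Bentry e == 1) p ->
  exists k, act_path A B k p = q.
Proof.
elim: p q => [|e p IH] [|f q] //; first by exists 0.
move=> /andP[hf hq] [hr hs hpq] /andP[/eqP hB hp].
have [k hk] := IH q hq hpq hp.
case: f hr hs hf => r s m /= <- <- hf.
set a : int := (A (er e) (es e))%:Z.
have ha : 0 < a by rewrite /a; move: hf; rewrite /validb /=; lia.
have hfa : 0 <= m%:Z < a by rewrite /a; move: hf; rewrite /validb /=; lia.
(* Feed the carry k of the tail back in: the new digit is m, with carry k. *)
exists (k * a + m%:Z - (em e)%:Z).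
rewrite [B _ _]hB mulr1 subrK -/a.
by rewrite divzMDl ?gt_eqF // modzMDl divz_small ?modz_small ?addr0 //= hk.
Qed.

End KEPAction.

Arguments ends {N} e.

Section Segments.
Variable N : nat.
Implicit Types mu nu : nat -> edge N.

Definition segn mu n : seq (edge N) := rev (mkseq mu n).

Lemma segnS mu n : segn mu n.+1 = mu n :: segn mu n.
Proof. by rewrite /segn /mkseq -addn1 iotaD map_cat rev_cat. Qed.

Lemma segn_addn mu j d : segn mu (j + d) = map mu (rev (iota j d)) ++ segn mu j.
Proof.
elim: d => [|d IH]; first by rewrite addn0.
by rewrite addnS segnS IH -addn1 iotaD rev_cat.
Qed.

Lemma segn_eq mu nu n : segn mu n = segn nu n <-> forall i, (i < n)%N -> mu i = nu i.
Proof.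
elim: n => [|n IH]; first by [].
rewrite !segnS; split => [[hn /IH hlt] i|hlt].
  by rewrite ltnS leq_eqVlt => /predU1P[->|/hlt].
by rewrite hlt // (proj2 IH) // => i /ltnW/hlt.
Qed.

Lemma segn_valid (A : 'M[nat]_N) mu n :
  (forall i, validb A (mu i)) -> all (validb A) (segn mu n).
Proof. by move=> hmu; rewrite all_rev /mkseq all_map; apply/allP => i _; apply: hmu. Qed.

End Segments.

Lemma Negz_add1 n : Negz n.+1 + 1 = Negz n.
Proof. lia. Qed.

Lemma Negz_sub1 n : Negz n - 1 = Negz n.+1.
Proof. lia. Qed.

Lemma le_Negz (k : int) j : k <= Negz j -> exists2 i, (j <= i)%N & k = Negz i.
Proof. by case: k => // i hij; exists i => //; lia. Qed.

Lemma lpath_valid N (A : 'M[nat]_N) mu : is_lpath A mu -> forall i, validb A (mu i).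
Proof. by move=> hmu i; case: (hmu (Negz i)). Qed.

Lemma lpath_link N (A : 'M[nat]_N) mu : is_lpath A mu -> forall i, es (mu i.+1) = er (mu i).
Proof. by move=> hmu i; case: (hmu (Negz i.+1)) => // _ /(_ erefl); rewrite Negz_add1. Qed.

Lemma ext_equivP N (A : 'M[nat]_N) B mu nu :
  ext_equiv A B mu nu <-> forall n, exists k, act_path A B k (segn mu n) = segn nu n.
Proof.
split=> [heq [|n]|heq n hn]; first by exists 0.
  exact: heq (Negz n) erefl.
by case: n hn => // n _; apply: heq n.+1.
Qed.

Lemma infinitely_often_or_last (b : nat -> bool) :
  (forall i, exists2 l, (i <= l)%N & b l) \/
  exists j, (forall i, (j <= i)%N -> ~~ b i) /\ ((0 < j)%N -> b j.-1).
Proof.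
case: (classic (forall i, exists2 l, (i <= l)%N & b l)) => [|hfin]; [by left|right].
have [i0 hi0] : exists i0, forall i, (i0 <= i)%N -> ~~ b i.
  apply: NNPP => hnot; apply: hfin => i0; apply: NNPP => hno; apply: hnot.
  by exists i0 => i hi; apply/negP => hb; apply: hno; exists i.
elim: i0 hi0 => [|i0 IH] hi0; first by exists 0.
case hb: (b i0); first by exists i0.+1.
by apply: IH => i; rewrite leq_eqVlt => /predU1P[<-|/hi0]; rewrite ?hb.
Qed.

Section Orbits.
Variables (N : nat) (A : 'M[nat]_N) (B : 'M[int]_N) (mu nu : nat -> edge N).
Hypotheses (hmu : is_lpath A mu) (hnu : is_lpath A nu).

(* The nat index j corresponds to the paper's K = -(j+1) = Negz j. *)
Definition odometer_tail j : Prop :=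
  [/\ forall i, (j <= i)%N -> es (mu i) = es (nu i),
      forall i, (j <= i)%N -> Bentry B (mu i) = 1
    & (0 < j)%N -> Bentry B (mu j.-1) = 0 /\ segn mu j = segn nu j].

Section SameOrbit.
Hypothesis horbit : forall n, exists k, act_path A B k (segn mu n) = segn nu n.

Lemma orbit_ends i : ends (mu i) = ends (nu i).
Proof.
have [k /(congr1 (map ends))] := horbit i.+1.
by rewrite act_path_ends !segnS => /= -[hr hs _]; rewrite /ends hr hs.
Qed.

Lemma orbit_agree_Bentry0 i : Bentry B (mu i) = 0 -> forall l, (l <= i)%N -> mu l = nu l.
Proof.
move=> hB; have [k] := horbit i.+1.
rewrite segnS act_path_Bentry0 -?segnS ?segn_valid //; last exact: lpath_valid.
by move/segn_eq => hagree l /hagree.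
Qed.

End SameOrbit.

Lemma odometer_tail_orbit j :
  odometer_tail j -> forall n, exists k, act_path A B k (segn mu n) = segn nu n.
Proof.
have [hvmu hvnu] := (lpath_valid hmu, lpath_valid hnu).
move=> [hes hB1 hlast] n; case: (ltnP n j) => hnj.
  have [_ /segn_eq hagree] := hlast (leq_ltn_trans (leq0n n) hnj).
  exists 0; rewrite act_path0 ?segn_valid //; apply/segn_eq => i hi.
  exact/hagree/(ltn_trans hi).
rewrite -(subnKC hnj) !segn_addn.
have [k hk] : exists k, act_path A B k (map mu (rev (iota j (n - j)))) =
                        map nu (rev (iota j (n - j))).
  apply: act_path_transitive.
  - by rewrite all_map; apply/allP => i _; apply: hvnu.
  - rewrite -!map_comp; apply/eq_in_map => i; rewrite mem_rev mem_iota => /andP[hji _].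
    by rewrite /= /ends -(lpath_link hmu) -(lpath_link hnu) !hes // ltnW.
  - by rewrite all_map; apply/allP => i; rewrite mem_rev mem_iota => /andP[/hB1 /= -> _].
exists k; have [k' ->] := act_path_cat A B k (map mu (rev (iota j (n - j)))) (segn mu j).
rewrite hk; congr (_ ++ _).
case: j hes hB1 hlast {hnj hk} => [//|j] _ _ /(_ erefl) [hB0 hseg].
by rewrite -hseg segnS act_path_Bentry0 // -(segnS mu) segn_valid.
Qed.

Lemma odometer_tailE :
  (exists K : int, K < 0 /\
     (forall k : int, k <= K -> es (at_ mu k) = es (at_ nu k)) /\
     (forall k : int, k <= K -> B (es (at_ mu (k - 1))) (es (at_ mu k)) = 1) /\
     (K < -1 ->
        B (es (at_ mu K)) (es (at_ mu (K + 1))) = 0 /\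
        seg mu (K + 1) = seg nu (K + 1)))
  <-> exists j, odometer_tail j.
Proof.
have hlink := lpath_link hmu.
split=> [[K [hK [hes [hB1 hlast]]]]|[j [hes hB1 hlast]]].
  have [j eK] : exists j, K = Negz j by case: K {hes hB1 hlast} hK => // j; exists j.
  subst K; exists j; split=> [i hji|i hji|].
  - by apply: (hes (Negz i)); lia.
  - by have := hB1 (Negz i); rewrite Negz_sub1 /= hlink; apply; lia.
  case: j {hK hes hB1} hlast => // j hlast.
  have /hlast : Negz j.+1 < -1 by lia.
  by rewrite Negz_add1 /= /Bentry -hlink.
exists (Negz j); split=> //; split=> [k /le_Negz[i hji ->]|]; first exact: hes.
split=> [k /le_Negz[i hji ->]|]; first by rewrite Negz_sub1 /= hlink; apply: hB1.
case: j {hes hB1} hlast => [|j] hlast hK; first by [].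
by rewrite Negz_add1 /= hlink; apply: hlast.
Qed.

End Orbits.

Theorem proposition6p2 (N : nat) (A : 'M[nat]_N) (B : 'M[int]_N)
    (hAB : forall i j, A i j = 0%N -> B i j = 0)
    (hB01 : forall i j, B i j = 0 \/ B i j = 1)
    (mu nu : nat -> edge N) (hmu : is_lpath A mu) (hnu : is_lpath A nu) :
  ext_equiv A B mu nu <->
  (mu = nu \/
   exists K : int, K < 0 /\
     (forall k : int, k <= K -> es (at_ mu k) = es (at_ nu k)) /\
     (forall k : int, k <= K -> B (es (at_ mu (k - 1))) (es (at_ mu k)) = 1) /\
     (K < -1 ->
        B (es (at_ mu K)) (es (at_ mu (K + 1))) = 0 /\
        seg mu (K + 1) = seg nu (K + 1))).
Proof.
rewrite ext_equivP (odometer_tailE B nu hmu).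
split=> [horbit|[<- n|[j]]]; last 2 first.
- by exists 0; rewrite act_path0 // segn_valid //; apply: lpath_valid hmu.
- exact: odometer_tail_orbit.
have [often|[j [hB0 hlast]]] := infinitely_often_or_last (fun i => Bentry B (mu i) == 0).
  left; apply: functional_extensionality => l.
  by have [i hli /eqP hi] := often l; apply: (orbit_agree_Bentry0 hmu horbit hi).
right; exists j; split=> [i _|i /hB0|].
- by have := orbit_ends horbit i => -[].
- by rewrite /Bentry; case: (hB01 (er (mu i)) (es (mu i))) => ->.
case: j {hB0} hlast => // j /(_ erefl) /eqP hB0 _; split=> //.
by apply/segn_eq => l; apply: (orbit_agree_Bentry0 hmu horbit hB0).
Qed.
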